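(* Let $V\subset U\subset\mathcal{A}_0$, and suppose that for every continuous linear functional $\lambda$ on $\mathcal{A}$, with $\lambda:=g$, we have $g(0)\in\lambda(V)$. Then the following are equivalent: (a) $\lambda(U)=\lambda(V)$ for every continuous linear functional $\lambda$ on $\mathcal{A}$; (b) for every continuous linear functional $\lambda$ on $\mathcal{A}$, $0\notin\lambda(V)$ implies $0\notin\lambda(U)$; (c) $U^T=V^T$.
   Context: $D=\{z:|z|<1\}$, $\overline D$ its closure. $\mathcal{A}$ is the space of functions $f(z)=\sum_{k\ge0}a_k(f)z^k$ analytic in $D$, with the topology of locally uniform convergence; $\mathcal{A}_0=\{f\in\mathcal{A}: a_0(f)=1\}$. $\mathcal{A}(\overline D)$ is the set of functions analytic in some disk $\{|z|<R\}$ with $R>1$, and $\mathcal{A}_0(\overline D)=\{g\in\mathcal{A}(\overline D):a_0(g)=1\}$. The Hadamard product is $(f*g)(z)=\sum_{k\ge0}a_k(f)a_k(g)z^k$. Every continuous linear functional $\lambda$ on $\mathcal{A}$ has the form $\lambda(f)=(f*g)(1)$ for a function $g\in\mathcal{A}(\overline D)$; this is written $\lambda:=g$. For $V\subset\mathcal{A}_0$, $V^T=\{g\in\mathcal{A}_0(\overline D): (f*g)(1)\ne0 \ \forall f\in V\}$. *)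

From mathcomp Require Import all_boot all_order all_algebra.
From mathcomp Require Export complex.
From mathcomp Require Export all_classical all_reals all_analysis.
Import Order.TTheory GRing.Theory Num.Theory numFieldNormedType.Exports.
Local Open Scope ring_scope.
Local Open Scope classical_set_scope.
Local Open Scope complex_scope.
Local Open Scope ring_scope.

(* A function f(z) = sum_k a_k z^k analytic in a disk centred at 0 is represented
   by its Taylor coefficient sequence a : nat -> R[i]. *)

Definition pseries {R : realType} (a : nat -> R[i]) (z : R[i]) : nat -> R[i]^o :=
  series (fun k => (a k * z ^+ k : R[i]^o)).

Definition inA {R : realType} (a : nat -> R[i]) : Prop :=
  forall z : R[i], `|z| < 1 -> cvgn (pseries a z).

Definition A0 {R : realType} : set (nat -> R[i]) :=
  [set a | inA a /\ a 0%N = 1].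

Definition inAbar {R : realType} (g : nat -> R[i]) : Prop :=
  exists2 rho : R, 1 < rho & forall z : R[i], `|z| < rho%:C -> cvgn (pseries g z).

Definition A0bar {R : realType} : set (nat -> R[i]) :=
  [set g | inAbar g /\ g 0%N = 1].

(* the continuous linear functional lambda := g, lambda(f) = (f*g)(1) = sum_k a_k(f) a_k(g) *)
Definition lam {R : realType} (g f : nat -> R[i]) : R[i] :=
  limn (series (fun k => (f k * g k : R[i]^o))).

Definition transv {R : realType} (V : set (nat -> R[i])) : set (nat -> R[i]) :=
  [set g | A0bar g /\ forall f, V f -> lam g f <> 0].

From Pilot Require Import Defs.
From mathcomp Require Import all_boot all_order all_algebra.
From mathcomp Require Import complex.
From mathcomp Require Import all_classical all_reals all_analysis.
From mathcomp Require Import lra.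
Import Order.TTheory GRing.Theory Num.Theory numFieldNormedType.Exports.
Import Normc.
Local Open Scope ring_scope.
Local Open Scope classical_set_scope.
Local Open Scope complex_scope.

(* The functional lambda_g(f) = sum_k a_k(f) a_k(g) converges absolutely: for
   some s < 1 < r with r s > 1 the sequences |a_k(f)| s^k and |a_k(g)| r^k are
   bounded, so its terms are dominated by a geometric series.  As a_0(f) = 1 on
   U, subtracting w from g(0) shifts lambda_g by -w on U; applying (b) to these
   shifted functionals gives lambda(U) = lambda(V).  If 0 is not in lambda(V),
   then g(0), which lies in lambda(V), is nonzero and g / g(0) belongs to
   A_0(closed disk); this normalisation translates between (b) and (c). *)

Local Notation Re := complex.Re.
Local Notation Im := complex.Im.

Section complex_series.
Context {R : realType}.
Implicit Types (f g h u : nat -> R[i]) (x w c : R[i]).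

Lemma normr_normc x : `|x| = (normc x)%:C. Proof. by []. Qed.

Lemma normc_ge0 x : 0 <= normc x. Proof. by case: x => a b; exact: sqrtr_ge0. Qed.

Lemma normc_real (a : R) : normc a%:C = `|a|.
Proof. by rewrite /= expr0n addr0 sqrtr_sqr. Qed.

Lemma normc_mul_real_exp x (a : R) k :
  0 <= a -> normc (x * a%:C ^+ k) = normc x * a ^+ k.
Proof. by move=> a0; rewrite normcM -rmorphXn normc_real ger0_norm ?exprn_ge0. Qed.

Lemma Re_le_normc x : `|Re x| <= normc x.
Proof. by case: x => a b /=; rewrite -sqrtr_sqr ler_wsqrtr // lerDl sqr_ge0. Qed.

Lemma Im_le_normc x : `|Im x| <= normc x.
Proof. by case: x => a b /=; rewrite -sqrtr_sqr ler_wsqrtr // lerDr sqr_ge0. Qed.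

Lemma cvg_series_dominated (a b : R ^nat) :
  (forall k, `|a k| <= b k) -> cvgn (series b) -> cvgn (series a).
Proof.
move=> ab cb; apply: normed_cvg.
by apply: (series_le_cvg _ _ ab cb) => k; [| exact: le_trans (ab k)].
Qed.

Lemma cvg_real_complex (a : R ^nat) (l : R) :
  a @ \oo --> l -> (fun n => (a n)%:C : R[i]^o) @ \oo --> (l%:C : R[i]^o).
Proof.
move=> al; apply/cvgrPdist_lt => e; rewrite ltcE /= => /andP[/eqP Ime0 Ree0].
have -> : e = (Re e)%:C by case: e Ime0 {Ree0} => a' b /= ->.
move/cvgrPdist_lt: al => /(_ _ Ree0); apply: filterS => n.
by rewrite -rmorphB normr_normc normc_real ltcR.
Qed.

(* [normed_cvg] needs a complete normed space over a realType, which R[i]^o is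
   not declared to be, so absolute convergence goes through Re and Im. *)
Lemma cvg_series_normc u :
  cvgn (series (fun k => normc (u k))) -> cvgn (series (u : R[i]^o ^nat)).
Proof.
move=> cu.
have cRe := cvg_series_dominated _ _ (fun k => Re_le_normc (u k)) cu.
have cIm := cvg_series_dominated _ _ (fun k => Im_le_normc (u k)) cu.
have -> : series (u : R[i]^o ^nat) = fun n =>
    ((series (fun k => Re (u k)) n)%:C : R[i]^o) + 'i * (series (fun k => Im (u k)) n)%:C.
  apply/funext => n; rewrite /series /= !rmorph_sum mulr_sumr -big_split /=.
  by apply: eq_bigr => k _; rewrite -complexE.
apply/cvg_ex; eexists; apply: cvgD; first exact: (cvg_real_complex _ _ cRe).
exact: cvgMl_tmp (cvg_real_complex _ _ cIm).
Qed.

Lemma cvg_series_normc_bounded u :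
  cvgn (series (u : R[i]^o ^nat)) -> exists M, forall k, normc (u k) <= M.
Proof.
move=> /cvg_series_cvg_0/cvgP/cvg_seq_bounded [M [_ uM]].
exists (Re (M + 1)) => k; have M1 : M < M + 1 by rewrite ltrDl.
by have := uM _ M1 k I; rewrite /= normr_normc lecE => /andP[].
Qed.

(* [Defs.pseries] is qualified: plain [pseries] is the exponential-series
   operator of mathcomp-analysis. *)
Lemma cvg_series_mul_pseries f g (s r : R) : 0 < s -> 0 < r -> 1 < r * s ->
  cvgn (Defs.pseries f s%:C) -> cvgn (Defs.pseries g r%:C) ->
  cvgn (series (fun k => f k * g k : R[i]^o)).
Proof.
move=> s0 r0 rs1 cf cg.
have [Mf fM] := cvg_series_normc_bounded _ cf.
have [Mg gM] := cvg_series_normc_bounded _ cg.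
have Mf0 : 0 <= Mf := le_trans (normc_ge0 _) (fM 0%N).
have Mg0 : 0 <= Mg := le_trans (normc_ge0 _) (gM 0%N).
have rs0 : 0 < r * s := lt_trans ltr01 rs1.
have q1 : `|(r * s)^-1| < 1 by rewrite gtr0_norm ?invr_gt0 // invf_lt1.
apply: cvg_series_normc.
apply: (@series_le_cvg R _ (geometric (Mf * Mg) (r * s)^-1)) => [k|k|k|].
- exact: normc_ge0.
- by apply/mulr_ge0/exprn_ge0; [exact: mulr_ge0 | rewrite invr_ge0 ltW].
- rewrite /geometric /= exprVn ler_pdivlMr ?exprn_gt0 //.
  rewrite normcM exprMn [r ^+ k * _]mulrC mulrACA.
  rewrite -normc_mul_real_exp ?(ltW s0) // -normc_mul_real_exp ?(ltW r0) //.
  by apply: ler_pM; rewrite ?normc_ge0.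
- exact: is_cvg_geometric_series.
Qed.

Lemma cvg_lam f g : inA f -> inAbar g -> cvgn (series (fun k => f k * g k : R[i]^o)).
Proof.
move=> cf [rho rho1 cg].
(* 1 < r < rho, s < 1 and r * s = (1 + r) / 2 > 1 *)
pose r := (1 + rho) / 2; pose s := (1 + r^-1) / 2.
have r1 : 1 < r by rewrite /r; lra.
have r0 : 0 < r := lt_trans ltr01 r1.
have ri1 : r^-1 < 1 by rewrite invf_lt1.
have ri0 : 0 < r^-1 by rewrite invr_gt0.
have s0 : 0 < s by rewrite /s; lra.
have rs1 : 1 < r * s by rewrite /s mulrA mulrDr mulr1 mulfV ?gt_eqF //; lra.
apply: (cvg_series_mul_pseries _ _ _ _ s0 r0 rs1).
- by apply: cf; rewrite normr_normc normc_real -[1]/(1%:C) ltcR gtr0_norm // /s; lra.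
- by apply: cg; rewrite normr_normc normc_real ltcR gtr0_norm // /r; lra.
Qed.

Definition delta0 w k : R[i] := if k is 0 then w else 0.

Lemma cvg_series_delta0 w : series (delta0 w : R[i]^o ^nat) @ \oo --> (w : R[i]^o).
Proof.
apply: cvg_near_cst; exists 1%N => // -[|n] _ //=.
by rewrite /series /= big_nat_recl // big1 ?addr0.
Qed.

Lemma pseriesB g h x : Defs.pseries (g - h) x = Defs.pseries g x - Defs.pseries h x.
Proof.
rewrite /Defs.pseries -seriesN -seriesD; congr series.
by apply/funext => k /=; rewrite mulrBl.
Qed.

Lemma pseriesZ g c x n : Defs.pseries (fun k => c * g k) x n = c * Defs.pseries g x n.
Proof.
rewrite /Defs.pseries /series /= mulr_sumr.
by apply: eq_bigr => k _; exact: esym (mulrA _ _ _).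
Qed.

Lemma inAbarB g h : inAbar g -> inAbar h -> inAbar (g - h).
Proof.
move=> [r r1 cg] [s s1 ch]; exists (Num.min r s); first by rewrite lt_min r1.
move=> x xrs; have [xr xs] : `|x| < r%:C /\ `|x| < s%:C.
  by split; apply: (lt_le_trans xrs); rewrite lecR ge_min lexx ?orbT.
by rewrite pseriesB; apply: (@is_cvgB _ (R[i]^o)); [exact: cg | exact: ch].
Qed.

Lemma inAbarZ g c : inAbar g -> inAbar (fun k => c * g k).
Proof.
move=> [r r1 cg]; exists r; first exact: r1.
move=> x xr; have -> : Defs.pseries (fun k => c * g k) x = fun n => c * Defs.pseries g x n.
  by apply/funext => n; exact: pseriesZ.
exact: (@is_cvgMl_tmp (R[i]^o) _ _ _ _ c (cg x xr)).
Qed.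

Lemma inAbar_delta0 w : inAbar (delta0 w).
Proof.
exists 2; first by rewrite ltr1n.
move=> x _; have -> : Defs.pseries (delta0 w) x = series (delta0 w : R[i]^o ^nat).
  by rewrite /Defs.pseries; congr series; apply/funext => -[|k] /=; rewrite ?mulr1 ?mul0r.
exact: cvgP (cvg_series_delta0 w).
Qed.

Lemma lamB f g h : inA f -> inAbar g -> inAbar h -> lam (g - h) f = lam g f - lam h f.
Proof.
move=> fA gA hA; rewrite /lam.
have -> : (fun k => f k * (g - h) k : R[i]^o) =
    (fun k => f k * g k : R[i]^o) - (fun k => f k * h k : R[i]^o).
  by apply/funext => k /=; rewrite mulrBr.
exact: (@lim_seriesB (R[i]^o) _ _ (cvg_lam _ _ fA gA) (cvg_lam _ _ fA hA)).
Qed.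

Lemma lamZ f g c : inA f -> inAbar g -> lam (fun k => c * g k) f = c * lam g f.
Proof.
move=> fA gA; rewrite /lam.
have -> : (fun k => f k * (c * g k) : R[i]^o) = c *: (fun k => f k * g k : R[i]^o).
  by apply/funext => k /=; rewrite mulrCA.
exact: (@lim_seriesZ (R[i]^o) _ c (cvg_lam _ _ fA gA)).
Qed.

Lemma lam_delta0 f w : lam (delta0 w) f = f 0%N * w.
Proof.
rewrite /lam; have -> : (fun k => f k * delta0 w k : R[i]^o) = delta0 (f 0%N * w).
  by apply/funext => -[|k] /=; rewrite ?mulr0.
exact: (cvg_lim (@norm_hausdorff _ _) (cvg_series_delta0 _)).
Qed.

Lemma lam_sub_delta0 f g w : A0 f -> inAbar g -> lam (g - delta0 w) f = lam g f - w.
Proof.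
move=> [fA f0] gA.
by rewrite (lamB _ _ _ fA gA (inAbar_delta0 w)) lam_delta0 f0 mul1r.
Qed.

Definition nonvanishing g (S : set (nat -> R[i])) := ~ (lam g @` S) 0.

Lemma nonvanishingP g (S : set (nat -> R[i])) :
  nonvanishing g S <-> forall f, S f -> lam g f <> 0.
Proof. by split=> [nS f Sf gf0 | nS [f Sf]]; [apply: nS; exists f | exact: nS]. Qed.

Lemma nonvanishing_scale g c (S : set (nat -> R[i])) : S `<=` A0 -> inAbar g -> c != 0 ->
  nonvanishing (fun k => c * g k) S <-> nonvanishing g S.
Proof.
move=> SA0 gA c0; rewrite !nonvanishingP.
split=> nS f Sf; have := nS f Sf; rewrite lamZ //; try exact: (SA0 f Sf).1.
- by apply: contra_not => ->; rewrite mulr0.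
- by move=> gf0 /eqP; rewrite mulf_eq0 (negPf c0) => /eqP.
Qed.

Lemma transvE (S : set (nat -> R[i])) g : transv S g <-> A0bar g /\ nonvanishing g S.
Proof. by rewrite nonvanishingP. Qed.

End complex_series.

Section transversal.
Context {R : realType} {U V : set (nat -> R[i])}.
Hypotheses (VU : V `<=` U) (UA0 : U `<=` A0).

Lemma image_lam_eq_of_nonvanishing :
  (forall g, inAbar g -> nonvanishing g V -> nonvanishing g U) ->
  forall g, inAbar g -> lam g @` U = lam g @` V.
Proof.
move=> nVU g gA; apply/seteqP; split=> _ [f Uf <-]; last by exists f; [exact: VU|].
pose w := lam g f; have gwA := inAbarB _ _ gA (inAbar_delta0 w).
have [v Vv gwv] : (lam (g - delta0 w) @` V) 0.
  apply: contrapT => nV; apply: nVU gwA nV _.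
  by exists f; rewrite ?(lam_sub_delta0 _ _ _ (UA0 _ Uf) gA) ?subrr.
exists v; first exact: Vv.
by apply/subr0_eq; rewrite -(lam_sub_delta0 _ _ _ (UA0 _ (VU _ Vv)) gA).
Qed.

Lemma transv_eq_of_nonvanishing :
  (forall g, inAbar g -> nonvanishing g V -> nonvanishing g U) -> transv U = transv V.
Proof.
move=> nVU; apply/seteqP; split=> g /transvE[g0A nS]; apply/transvE; split=> //.
- by move=> [f Vf gf0]; apply: nS; exists f; [exact: VU|].
- exact: nVU g0A.1 nS.
Qed.

Hypothesis g0_lamV : forall g, inAbar g -> (lam g @` V) (g 0%N).

Lemma nonvanishing_of_transv_eq : transv U = transv V ->
  forall g, inAbar g -> nonvanishing g V -> nonvanishing g U.
Proof.
move=> UTV g gA nV.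
have g00 : g 0%N != 0.
  by apply/eqP => g0; apply: nV; rewrite -g0; exact: g0_lamV.
have VA0 : V `<=` A0 := fun f Vf => UA0 _ (VU _ Vf).
have ig00 : (g 0%N)^-1 != 0 by rewrite invr_eq0.
have gnA : A0bar (fun k => (g 0%N)^-1 * g k) by split; [exact: inAbarZ | rewrite mulVf].
have gnV := (nonvanishing_scale _ _ _ VA0 gA ig00).2 nV.
have /transvE[_ gnU] : transv U (fun k => (g 0%N)^-1 * g k) by rewrite UTV; apply/transvE.
exact: (nonvanishing_scale _ _ _ UA0 gA ig00).1 gnU.
Qed.

End transversal.

Theorem lemma4 (R : realType) (U V : set (nat -> R[i])) :
  V `<=` U -> U `<=` A0 ->
  (forall g, inAbar g -> (lam g @` V) (g 0%N)) ->
  let a := forall g, inAbar g -> lam g @` U = lam g @` V in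
  let b := forall g, inAbar g -> ~ (lam g @` V) 0 -> ~ (lam g @` U) 0 in
  let c := transv U = transv V in
  (a <-> b) /\ (b <-> c).
Proof.
move=> VU UA0 g0_lamV a b c.
have ab : a -> b by move=> ha g gA; rewrite ha.
have ba : b -> a := image_lam_eq_of_nonvanishing VU UA0.
have bc : b -> c := transv_eq_of_nonvanishing VU.
have cb : c -> b := nonvanishing_of_transv_eq VU UA0 g0_lamV.
by split; split.
Qed.
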